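(* Let $p=(p_{ijk})_{i,j,k\in\{0,1\}}\in\Delta_7$ be strictly positive (all eight entries $>0$). Then $p\in\operatorname{RBM}_{3,2}$ if and only if $p$ lies in the union of the following six sets: $$\{p_{000}p_{011}\ge p_{001}p_{010},\ p_{100}p_{111}\ge p_{101}p_{110}\},\qquad \{p_{000}p_{011}\le p_{001}p_{010},\ p_{100}p_{111}\le p_{101}p_{110}\},$$ $$\{p_{000}p_{101}\ge p_{001}p_{100},\ p_{010}p_{111}\ge p_{011}p_{110}\},\qquad \{p_{000}p_{101}\le p_{001}p_{100},\ p_{010}p_{111}\le p_{011}p_{110}\},$$ $$\{p_{000}p_{110}\ge p_{100}p_{010},\ p_{001}p_{111}\ge p_{101}p_{011}\},\qquad \{p_{000}p_{110}\le p_{100}p_{010},\ p_{001}p_{111}\le p_{101}p_{011}\}.$$ Equivalently, with the determinants $d_{i,j}$ defined in the context, $p\in\operatorname{RBM}_{3,2}$ iff there is $i\in\{1,2,3\}$ with $d_{i,0}(p)\,d_{i,1}(p)\ge 0$.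
   Context: A distribution of three binary random variables is a $2\times2\times2$ tensor $p=(p_{ijk})_{i,j,k\in\{0,1\}}$ with nonnegative entries summing to $1$; the set of these is the simplex $\Delta_7$. For nonnegative vectors $a,b,c\in\mathbb{R}^2_{\ge0}$, $a\otimes b\otimes c$ is the tensor with entries $a_ib_jc_k$. The model $\operatorname{RBM}_{3,2}$ is the set of $p\in\Delta_7$ of the form $p=(a_1\otimes b_1\otimes c_1+d_1\otimes e_1\otimes f_1)*(a_2\otimes b_2\otimes c_2+d_2\otimes e_2\otimes f_2)$ with all vectors in $\mathbb{R}^2_{\ge0}$, where $*$ is the entrywise (Hadamard) product. The determinants of the six $2\times2$ slices are $d_{1,0}=p_{000}p_{011}-p_{001}p_{010}$, $d_{1,1}=p_{100}p_{111}-p_{101}p_{110}$, $d_{2,0}=p_{000}p_{101}-p_{001}p_{100}$, $d_{2,1}=p_{010}p_{111}-p_{011}p_{110}$, $d_{3,0}=p_{000}p_{110}-p_{010}p_{100}$, $d_{3,1}=p_{001}p_{111}-p_{011}p_{101}$. *)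

(* classical real numbers. Index 0 is [false], index 1 is [true]. *)
From Stdlib Require Import Reals Lra.
Open Scope R_scope.

Definition tensor := bool -> bool -> bool -> R.

Definition in_simplex (p : tensor) : Prop :=
  (forall i j k, 0 <= p i j k) /\
  p false false false + p false false true + p false true false + p false true true
  + p true false false + p true false true + p true true false + p true true true = 1.

Definition nonneg2 (a : bool -> R) : Prop := 0 <= a false /\ 0 <= a true.

Definition outer3 (a b c : bool -> R) : tensor := fun i j k => a i * b j * c k.

Definition RBM32 (p : tensor) : Prop :=
  in_simplex p /\
  exists a1 b1 c1 d1 e1 f1 a2 b2 c2 d2 e2 f2 : bool -> R,
    nonneg2 a1 /\ nonneg2 b1 /\ nonneg2 c1 /\ nonneg2 d1 /\ nonneg2 e1 /\ nonneg2 f1 /\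
    nonneg2 a2 /\ nonneg2 b2 /\ nonneg2 c2 /\ nonneg2 d2 /\ nonneg2 e2 /\ nonneg2 f2 /\
    forall i j k,
      p i j k = (outer3 a1 b1 c1 i j k + outer3 d1 e1 f1 i j k)
                * (outer3 a2 b2 c2 i j k + outer3 d2 e2 f2 i j k).

From Stdlib Require Import Reals Lra.
Open Scope R_scope.

(* For Q = a (x) b (x) c + d (x) e (x) f, the i-th slice of Q along the first axis is
   a_i b c^T + d_i e f^T, with determinant a_i d_i [b,e] [c,f], where [u,v] := u_0 v_1 - u_1 v_0.
   The Hadamard product of two nonnegative 2x2 matrices whose determinants have the same weak
   sign has a determinant of that sign.  So if p = Q * S and the two slice determinants of p
   along the first axis have strictly opposite signs, then [b1,e1][c1,f1][b2,e2][c2,f2] < 0,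
   and similarly along the other axes; but the product of these three numbers is a square.
   Conversely, a positive 2x2 matrix with nonnegative (resp. nonpositive) determinant is,
   entrywise, a rank-one matrix times 1 + t E_00 (resp. 1 + t E_01) with t >= 0.  If both slices
   along the first axis have determinants of the same sign, this writes p as a tensor whose
   slices have rank one times (all ones) + t (x) g (x) h; the other axes follow by transposing. *)

Definition vec2 (x y : R) : bool -> R := fun b => if b then y else x.

Definition cross (u v : bool -> R) : R := u false * v true - u true * v false.

Definition det2 (m : bool -> bool -> R) : R :=
  m false false * m true true - m false true * m true false.

Definition same_sign (x y : R) : Prop := (0 <= x /\ 0 <= y) \/ (x <= 0 /\ y <= 0).

Definition slice_condition (p : tensor) : Prop :=
  same_sign (det2 (fun j k => p false j k)) (det2 (fun j k => p true j k)) \/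
  same_sign (det2 (fun i k => p i false k)) (det2 (fun i k => p i true k)) \/
  same_sign (det2 (fun i j => p i j false)) (det2 (fun i j => p i j true)).

Definition nonneg_rank2 (q : tensor) : Prop :=
  exists a b c d e f : bool -> R,
    nonneg2 a /\ nonneg2 b /\ nonneg2 c /\ nonneg2 d /\ nonneg2 e /\ nonneg2 f /\
    forall i j k, q i j k = outer3 a b c i j k + outer3 d e f i j k.

Definition hadamard_rank2 (p : tensor) : Prop :=
  exists q s, nonneg_rank2 q /\ nonneg_rank2 s /\ forall i j k, p i j k = q i j k * s i j k.

Lemma nonneg2_vec2 x y : 0 <= x -> 0 <= y -> nonneg2 (vec2 x y).
Proof. now split. Qed.

Lemma nonneg2_at a i : nonneg2 a -> 0 <= a i.
Proof. now intros [H0 H1]; destruct i. Qed.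

Lemma same_sign_of_mul_nonneg x y : 0 <= x * y -> same_sign x y.
Proof.
  intros Hxy; unfold same_sign.
  destruct (Rle_dec 0 x), (Rle_dec 0 y); try (left; lra); try (right; lra).
  - destruct (Req_dec x 0); [right | ]; nra.
  - destruct (Req_dec y 0); [right | ]; nra.
Qed.

Lemma same_sign_sub_iff x y z w :
  same_sign (x - y) (z - w) <-> (x >= y /\ z >= w) \/ (x <= y /\ z <= w).
Proof. unfold same_sign; lra. Qed.

Lemma one_of_three_nonneg x y z : 0 <= x * y * z -> 0 <= x \/ 0 <= y \/ 0 <= z.
Proof.
  intros Hxyz.
  destruct (Rle_dec 0 x), (Rle_dec 0 y), (Rle_dec 0 z); auto.
  assert (0 < x * y) by nra; nra.
Qed.

Lemma RBM32_iff_hadamard_rank2 p : RBM32 p <-> in_simplex p /\ hadamard_rank2 p.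
Proof.
  split.
  - intros [Hsimplex (a1 & b1 & c1 & d1 & e1 & f1 & a2 & b2 & c2 & d2 & e2 & f2 &
                      Ha1 & Hb1 & Hc1 & Hd1 & He1 & Hf1 & Ha2 & Hb2 & Hc2 & Hd2 & He2 & Hf2 & Hp)].
    split; [exact Hsimplex |].
    exists (fun i j k => outer3 a1 b1 c1 i j k + outer3 d1 e1 f1 i j k),
           (fun i j k => outer3 a2 b2 c2 i j k + outer3 d2 e2 f2 i j k).
    split; [| split; [| exact Hp]].
    + exists a1, b1, c1, d1, e1, f1; repeat (split; [assumption |]); reflexivity.
    + exists a2, b2, c2, d2, e2, f2; repeat (split; [assumption |]); reflexivity.
  - intros [Hsimplex
              (q & s & (a1 & b1 & c1 & d1 & e1 & f1 & Ha1 & Hb1 & Hc1 & Hd1 & He1 & Hf1 & Hq)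
                 & (a2 & b2 & c2 & d2 & e2 & f2 & Ha2 & Hb2 & Hc2 & Hd2 & He2 & Hf2 & Hs) & Hp)].
    split; [exact Hsimplex |].
    exists a1, b1, c1, d1, e1, f1, a2, b2, c2, d2, e2, f2.
    repeat (split; [assumption |]).
    intros i j k; rewrite Hp, Hq, Hs; reflexivity.
Qed.

Lemma nonneg_rank2_nonneg q : nonneg_rank2 q -> forall i j k, 0 <= q i j k.
Proof.
  intros (a & b & c & d & e & f & Ha & Hb & Hc & Hd & He & Hf & Hq) i j k.
  rewrite Hq; unfold outer3.
  apply Rplus_le_le_0_compat; repeat apply Rmult_le_pos; apply nonneg2_at; assumption.
Qed.

Lemma nonneg_rank2_transpose12 q : nonneg_rank2 q -> nonneg_rank2 (fun i j k => q j i k).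
Proof.
  intros (a & b & c & d & e & f & Ha & Hb & Hc & Hd & He & Hf & Hq).
  exists b, a, c, e, d, f; repeat (split; [assumption |]).
  intros i j k; rewrite Hq; unfold outer3; ring.
Qed.

Lemma nonneg_rank2_rotate q : nonneg_rank2 q -> nonneg_rank2 (fun i j k => q j k i).
Proof.
  intros (a & b & c & d & e & f & Ha & Hb & Hc & Hd & He & Hf & Hq).
  exists c, a, b, f, d, e; repeat (split; [assumption |]).
  intros i j k; rewrite Hq; unfold outer3; ring.
Qed.

Lemma hadamard_rank2_transpose12 p : hadamard_rank2 p -> hadamard_rank2 (fun i j k => p j i k).
Proof.
  intros (q & s & Hq & Hs & Hp).
  exists (fun i j k => q j i k), (fun i j k => s j i k).
  split; [| split]; auto using nonneg_rank2_transpose12.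
Qed.

Lemma hadamard_rank2_rotate p : hadamard_rank2 p -> hadamard_rank2 (fun i j k => p j k i).
Proof.
  intros (q & s & Hq & Hs & Hp).
  exists (fun i j k => q j k i), (fun i j k => s j k i).
  split; [| split]; auto using nonneg_rank2_rotate.
Qed.

Lemma det2_hadamard_nonneg (m n r : bool -> bool -> R) :
  (forall j k, 0 <= m j k) -> (forall j k, 0 <= n j k) ->
  (forall j k, r j k = m j k * n j k) ->
  0 <= det2 m -> 0 <= det2 n -> 0 <= det2 r.
Proof.
  intros Hm Hn Hr Hdm Hdn; unfold det2 in *; rewrite !Hr.
  assert (m false true * m true false * (n false true * n true false)
          <= m false false * m true true * (n false false * n true true)).
  { apply Rmult_le_compat; try apply Rmult_le_pos; auto; lra. }
  lra.
Qed.

(* Swapping the two columns negates both determinants. *)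
Lemma det2_hadamard_nonpos (m n r : bool -> bool -> R) :
  (forall j k, 0 <= m j k) -> (forall j k, 0 <= n j k) ->
  (forall j k, r j k = m j k * n j k) ->
  det2 m <= 0 -> det2 n <= 0 -> det2 r <= 0.
Proof.
  intros Hm Hn Hr Hdm Hdn.
  assert (H : 0 <= det2 (fun j k => r j (negb k))).
  { apply (det2_hadamard_nonneg (fun j k => m j (negb k)) (fun j k => n j (negb k)));
      auto; unfold det2 in *; simpl; lra. }
  unfold det2 in *; simpl in H; lra.
Qed.

Lemma rank2_slice_det (q : tensor) a b c d e f i :
  (forall i j k, q i j k = outer3 a b c i j k + outer3 d e f i j k) ->
  det2 (fun j k => q i j k) = a i * d i * (cross b e * cross c f).
Proof. intros Hq; unfold det2; rewrite !Hq; unfold outer3, cross; ring. Qed.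

Lemma hadamard_rank2_slice_same_sign (p q s : tensor)
    (a1 b1 c1 d1 e1 f1 a2 b2 c2 d2 e2 f2 : bool -> R) :
  nonneg2 a1 -> nonneg2 d1 -> nonneg2 a2 -> nonneg2 d2 ->
  (forall i j k, 0 <= q i j k) -> (forall i j k, 0 <= s i j k) ->
  (forall i j k, q i j k = outer3 a1 b1 c1 i j k + outer3 d1 e1 f1 i j k) ->
  (forall i j k, s i j k = outer3 a2 b2 c2 i j k + outer3 d2 e2 f2 i j k) ->
  (forall i j k, p i j k = q i j k * s i j k) ->
  0 <= cross b1 e1 * cross c1 f1 * (cross b2 e2 * cross c2 f2) ->
  same_sign (det2 (fun j k => p false j k)) (det2 (fun j k => p true j k)).
Proof.
  intros Ha1 Hd1 Ha2 Hd2 Hq0 Hs0 Hq Hs Hp Hxy.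
  assert (Hu : forall i, 0 <= a1 i * d1 i) by (intro; apply Rmult_le_pos; apply nonneg2_at; auto).
  assert (Hv : forall i, 0 <= a2 i * d2 i) by (intro; apply Rmult_le_pos; apply nonneg2_at; auto).
  assert (Hdq := fun i => rank2_slice_det q a1 b1 c1 d1 e1 f1 i Hq).
  assert (Hds := fun i => rank2_slice_det s a2 b2 c2 d2 e2 f2 i Hs).
  destruct (same_sign_of_mul_nonneg _ _ Hxy) as [[Hx Hy] | [Hx Hy]]; [left | right]; split.
  1, 2: eapply det2_hadamard_nonneg; [| | intros j k; apply Hp | rewrite Hdq | rewrite Hds];
        auto; apply Rmult_le_pos; auto.
  1, 2: eapply det2_hadamard_nonpos; [| | intros j k; apply Hp | rewrite Hdq | rewrite Hds];
        auto; generalize (Hu false) (Hu true) (Hv false) (Hv true); nra.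
Qed.

Lemma hadamard_rank2_slice_condition p : hadamard_rank2 p -> slice_condition p.
Proof.
  intros (q & s & Hq & Hs & Hp).
  pose proof (nonneg_rank2_nonneg q Hq) as Hq0; pose proof (nonneg_rank2_nonneg s Hs) as Hs0.
  destruct Hq as (a1 & b1 & c1 & d1 & e1 & f1 & Ha1 & Hb1 & Hc1 & Hd1 & He1 & Hf1 & Hq).
  destruct Hs as (a2 & b2 & c2 & d2 & e2 & f2 & Ha2 & Hb2 & Hc2 & Hd2 & He2 & Hf2 & Hs).
  assert (Hsquare :
    0 <= (cross b1 e1 * cross c1 f1 * (cross b2 e2 * cross c2 f2))
         * (cross a1 d1 * cross c1 f1 * (cross a2 d2 * cross c2 f2))
         * (cross a1 d1 * cross b1 e1 * (cross a2 d2 * cross b2 e2))).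
  { set (z := cross a1 d1 * cross b1 e1 * cross c1 f1
              * (cross a2 d2 * cross b2 e2 * cross c2 f2)).
    replace (_ * _ * _) with (z * z) by (unfold z; ring). apply Rle_0_sqr. }
  destruct (one_of_three_nonneg _ _ _ Hsquare) as [H1 | [H2 | H3]].
  - left; exact (hadamard_rank2_slice_same_sign p q s a1 b1 c1 d1 e1 f1 a2 b2 c2 d2 e2 f2
                  Ha1 Hd1 Ha2 Hd2 Hq0 Hs0 Hq Hs Hp H1).
  - right; left.
    apply (hadamard_rank2_slice_same_sign (fun i j k => p j i k) (fun i j k => q j i k)
             (fun i j k => s j i k) b1 a1 c1 e1 d1 f1 b2 a2 c2 e2 d2 f2);
      auto; intros i j k; try rewrite Hq; try rewrite Hs; unfold outer3; ring.
  - right; right.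
    apply (hadamard_rank2_slice_same_sign (fun i j k => p j k i) (fun i j k => q j k i)
             (fun i j k => s j k i) c1 a1 b1 f1 d1 e1 c2 a2 b2 f2 d2 e2);
      auto; intros i j k; try rewrite Hq; try rewrite Hs; unfold outer3; ring.
Qed.

Definition corner_factorization (g h : bool -> R) (m : bool -> bool -> R) : Prop :=
  exists (u w : bool -> R) (t : R), nonneg2 u /\ nonneg2 w /\ 0 <= t /\
    forall j k, m j k = u j * w k * (1 + t * g j * h k).

(* Match the entries (0,1), (1,0), (1,1) with u (x) w; the determinant is what is left
   for the entry (0,0). *)
Lemma corner_factorization_of_det2_nonneg m :
  (forall j k, 0 < m j k) -> 0 <= det2 m -> corner_factorization (vec2 1 0) (vec2 1 0) m.
Proof.
  intros Hm Hdet.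
  pose proof (Hm false false); pose proof (Hm false true);
  pose proof (Hm true false); pose proof (Hm true true).
  exists (vec2 (m false true) (m true true)), (vec2 (m true false / m true true) 1),
         (det2 m / (m false true * m true false)).
  split; [| split; [| split]].
  - apply nonneg2_vec2; lra.
  - apply nonneg2_vec2; [apply Rlt_le, Rdiv_lt_0_compat |]; lra.
  - apply Rmult_le_pos; [exact Hdet | apply Rlt_le, Rinv_0_lt_compat; nra].
  - unfold det2 in *; intros [|] [|]; simpl; field; lra.
Qed.

Lemma corner_factorization_of_det2_nonpos m :
  (forall j k, 0 < m j k) -> det2 m <= 0 -> corner_factorization (vec2 1 0) (vec2 0 1) m.
Proof.
  intros Hm Hdet.
  destruct (corner_factorization_of_det2_nonneg (fun j k => m j (negb k)))
    as (u & w & t & Hu & [Hw0 Hw1] & Ht & Hmuwt); auto.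
  { unfold det2 in *; simpl; lra. }
  exists u, (fun k => w (negb k)), t.
  split; [exact Hu | split; [split; assumption | split; [exact Ht |]]].
  intros j [|]; [apply (Hmuwt j false) | apply (Hmuwt j true)].
Qed.

Lemma hadamard_rank2_of_corner_factorizations p g h :
  nonneg2 g -> nonneg2 h ->
  corner_factorization g h (fun j k => p false j k) ->
  corner_factorization g h (fun j k => p true j k) ->
  hadamard_rank2 p.
Proof.
  intros Hg Hh (u0 & w0 & t0 & Hu0 & Hw0 & Ht0 & Hp0) (u1 & w1 & t1 & Hu1 & Hw1 & Ht1 & Hp1).
  exists (fun i j k => outer3 (vec2 1 0) u0 w0 i j k + outer3 (vec2 0 1) u1 w1 i j k),
         (fun i j k => outer3 (fun _ => 1) (fun _ => 1) (fun _ => 1) i j k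
                       + outer3 (vec2 t0 t1) g h i j k).
  split; [| split].
  - exists (vec2 1 0), u0, w0, (vec2 0 1), u1, w1.
    repeat (split; [first [assumption | split; simpl; lra] |]); reflexivity.
  - exists (fun _ => 1), (fun _ => 1), (fun _ => 1), (vec2 t0 t1), g, h.
    repeat (split; [first [assumption | split; simpl; lra] |]); reflexivity.
  - intros [|] j k; [rewrite Hp1 | rewrite Hp0]; unfold outer3; simpl; ring.
Qed.

Lemma slice_same_sign_hadamard_rank2 p :
  (forall i j k, 0 < p i j k) ->
  same_sign (det2 (fun j k => p false j k)) (det2 (fun j k => p true j k)) ->
  hadamard_rank2 p.
Proof.
  intros Hp [[H0 H1] | [H0 H1]].
  - apply (hadamard_rank2_of_corner_factorizations p (vec2 1 0) (vec2 1 0));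
      try apply nonneg2_vec2; try lra; apply corner_factorization_of_det2_nonneg; auto.
  - apply (hadamard_rank2_of_corner_factorizations p (vec2 1 0) (vec2 0 1));
      try apply nonneg2_vec2; try lra; apply corner_factorization_of_det2_nonpos; auto.
Qed.

Lemma slice_condition_hadamard_rank2 p :
  (forall i j k, 0 < p i j k) -> slice_condition p -> hadamard_rank2 p.
Proof.
  intros Hp [H1 | [H2 | H3]].
  - exact (slice_same_sign_hadamard_rank2 p Hp H1).
  - apply (hadamard_rank2_transpose12 (fun i j k => p j i k)).
    exact (slice_same_sign_hadamard_rank2 _ (fun i j k => Hp j i k) H2).
  - apply (hadamard_rank2_rotate (fun i j k => p k i j)).
    apply (hadamard_rank2_rotate (fun i j k => p j k i)).
    exact (slice_same_sign_hadamard_rank2 (fun i j k => p j k i) (fun i j k => Hp j k i) H3).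
Qed.

Theorem theorem1 (p : tensor) :
  in_simplex p ->
  (forall i j k, 0 < p i j k) ->
  (RBM32 p <->
   (  (p false false false * p false true true >= p false false true * p false true false /\
       p true false false * p true true true >= p true false true * p true true false)
   \/ (p false false false * p false true true <= p false false true * p false true false /\
       p true false false * p true true true <= p true false true * p true true false)
   \/ (p false false false * p true false true >= p false false true * p true false false /\
       p false true false * p true true true >= p false true true * p true true false)
   \/ (p false false false * p true false true <= p false false true * p true false false /\
       p false true false * p true true true <= p false true true * p true true false)
   \/ (p false false false * p true true false >= p true false false * p false true false /\
       p false false true * p true true true >= p true false true * p false true true)
   \/ (p false false false * p true true false <= p true false false * p false true false /\
       p false false true * p true true true <= p true false true * p false true true))).
Proof.
  intros Hsimplex Hpos.
  transitivity (slice_condition p).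
  - rewrite RBM32_iff_hadamard_rank2; split.
    + intros [_ H]; exact (hadamard_rank2_slice_condition p H).
    + intros H; exact (conj Hsimplex (slice_condition_hadamard_rank2 p Hpos H)).
  - unfold slice_condition, det2; rewrite !same_sign_sub_iff.
    rewrite (Rmult_comm (p false true false) (p true false false)),
            (Rmult_comm (p false true true) (p true false true)).
    tauto.
Qed.
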